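(* Let $(D,\mathrm{left},\mathrm{right})$ be an interval domain. For $a\le b$ in $\max(D)$ let $\phi^{-1}[a,b]$ denote the unique $z\in D$ with $\mathrm{left}(z)=a$ and $\mathrm{right}(z)=b$. Then: (i) if $a\ll p\ll b$ in $(\max(D),\le)$, then $\phi^{-1}[a,b]\ll p$ in $D$; (ii) the interval topology on the bicontinuous poset $(\max(D),\le)$ coincides with the relative Scott topology that $\max(D)$ inherits from $D$. Thus $(\max(D),\le)$ is a globally hyperbolic poset.
   Context: For a poset $(P,\sqsubseteq)$: directed (resp. filtered) sets are nonempty sets in which any two elements have an upper (resp. lower) bound in the set; $\bigsqcup S$ is the supremum; $x\ll y$ iff for every directed $S\subseteq P$ with a supremum, $y\sqsubseteq\bigsqcup S$ implies $x\sqsubseteq s$ for some $s\in S$; $\Uparrow x=\{a: x\ll a\}$, $\Downarrow x=\{a:a\ll x\}$. $P$ is continuous if there is $B\subseteq P$ such that for each $x$, $B\cap\Downarrow x$ contains a directed set with supremum $x$. A continuous poset is bicontinuous if (1) $x\ll y$ iff for every filtered $S$ having an infimum, $\bigwedge S\sqsubseteq x$ implies $s\sqsubseteq y$ for some $s\in S$; and (2) each $\Uparrow x$ is filtered with infimum $x$. On a bicontinuous poset the sets $(a,b)=\{x: a\ll x\ll b\}$ form a basis of the interval topology. A globally hyperbolic poset is a bicontinuous poset in which every closed interval $\{x: a\le x\le b\}$ is compact in the interval topology. A continuous dcpo is a continuous poset in which every directed set has a supremum. $\max(P)$ is the set of maximal elements, $x\sqcap y$ the infimum of $\{x,y\}$.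 The Scott topology consists of upper sets $U$ such that $\bigsqcup S\in U$ implies $S\cap U\ne\emptyset$ for directed $S$. An interval poset is a poset $D$ with functions $\mathrm{left},\mathrm{right}:D\to\max(D)$ such that (only named infima are assumed to exist): (i) $x=\mathrm{left}(x)\sqcap\mathrm{right}(x)$ for all $x$; (ii) if $\mathrm{right}(x)=\mathrm{left}(y)$ then $\mathrm{left}(x\sqcap y)=\mathrm{left}(x)$ and $\mathrm{right}(x\sqcap y)=\mathrm{right}(y)$; (iii) for $p\in\max(D)$ with $x\sqsubseteq p$: $\mathrm{left}(\mathrm{left}(x)\sqcap p)=\mathrm{left}(x)$, $\mathrm{right}(\mathrm{left}(x)\sqcap p)=p$, $\mathrm{left}(p\sqcap\mathrm{right}(x))=p$, $\mathrm{right}(p\sqcap\mathrm{right}(x))=\mathrm{right}(x)$. On $\max(D)$ define $a\le b$ iff $a=\mathrm{left}(z)$, $b=\mathrm{right}(z)$ for some $z\in D$; this is a partial order, and $x\mapsto[\mathrm{left}(x),\mathrm{right}(x)]$ is an order isomorphism from $D$ onto the closed intervals of $(\max(D),\le)$ under reverse inclusion. For $p,q\in\max(D)$ let $[p,\cdot]=\mathrm{left}^{-1}(p)$ and $[\cdot,q]=\mathrm{right}^{-1}(q)$, regarded as subposets of $D$. An interval domain is an interval poset $(D,\mathrm{left},\mathrm{right})$ such that $D$ is a continuous dcpo and: (i) if $p\in\Uparrow x\cap\max(D)$ then $\Uparrow(\mathrm{left}(x)\sqcap p)\ne\emptyset$ and $\Uparrow(p\sqcap\mathrm{right}(x))\ne\emptyset$;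 (ii) for all $x\in D$ the following are equivalent: (a) $\Uparrow x\ne\emptyset$; (b) for all $y\in[\mathrm{left}(x),\cdot]$ with $y\sqsubseteq x$, $y\ll\mathrm{right}(y)$ in the poset $[\cdot,\mathrm{right}(y)]$; (c) for all $y\in[\cdot,\mathrm{right}(x)]$ with $y\sqsubseteq x$, $y\ll\mathrm{left}(y)$ in the poset $[\mathrm{left}(y),\cdot]$; (iii)(a) for every directed $S\subseteq[p,\cdot]$, $\mathrm{left}(\bigsqcup S)=p$ and $\mathrm{right}(\bigsqcup S)=\mathrm{right}(\bigsqcup T)$ for every directed $T\subseteq[q,\cdot]$ with $\mathrm{right}(T)=\mathrm{right}(S)$ (images); (iii)(b) for every directed $S\subseteq[\cdot,q]$, $\mathrm{right}(\bigsqcup S)=q$ and $\mathrm{left}(\bigsqcup S)=\mathrm{left}(\bigsqcup T)$ for every directed $T\subseteq[\cdot,p]$ with $\mathrm{left}(T)=\mathrm{left}(S)$; (iv) for all $x\in D$, $\{y\in\max(D): x\sqsubseteq y\}$ is compact in the relative Scott topology. For an interval domain, $(\max(D),\le)$ is a bicontinuous poset. *)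

From Stdlib Require Import List.
Set Implicit Arguments.

Section OrderTheory.
Variable T : Type.
Variable le : T -> T -> Prop.

Definition is_partial_order : Prop :=
  (forall x, le x x) /\
  (forall x y, le x y -> le y x -> x = y) /\
  (forall x y z, le x y -> le y z -> le x z).

Definition directed (S : T -> Prop) : Prop :=
  (exists x, S x) /\
  (forall x y, S x -> S y -> exists z, S z /\ le x z /\ le y z).

Definition filtered (S : T -> Prop) : Prop :=
  (exists x, S x) /\
  (forall x y, S x -> S y -> exists z, S z /\ le z x /\ le z y).

Definition is_sup (S : T -> Prop) (s : T) : Prop :=
  (forall x, S x -> le x s) /\ (forall u, (forall x, S x -> le x u) -> le s u).

Definition is_inf (S : T -> Prop) (i : T) : Prop :=
  (forall x, S x -> le i x) /\ (forall u, (forall x, S x -> le u x) -> le u i).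

Definition is_inf2 (a b z : T) : Prop := is_inf (fun w => w = a \/ w = b) z.

Definition is_sup_in (P : T -> Prop) (S : T -> Prop) (s : T) : Prop :=
  P s /\ (forall x, S x -> le x s) /\
  (forall u, P u -> (forall x, S x -> le x u) -> le s u).

Definition waybelow_in (P : T -> Prop) (x y : T) : Prop :=
  forall S : T -> Prop, (forall s, S s -> P s) -> directed S ->
    forall s, is_sup_in P S s -> le y s -> exists t, S t /\ le x t.

Definition waybelow (x y : T) : Prop :=
  forall S : T -> Prop, directed S ->
    forall s, is_sup S s -> le y s -> exists t, S t /\ le x t.

Definition continuous_poset : Prop :=
  is_partial_order /\
  exists B : T -> Prop, forall x, exists S : T -> Prop,
    (forall s, S s -> B s /\ waybelow s x) /\ directed S /\ is_sup S x.

Definition bicontinuous : Prop :=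
  continuous_poset /\
  (forall x y, waybelow x y <->
     (forall (S : T -> Prop) i, filtered S -> is_inf S i -> le i x ->
        exists s, S s /\ le s y)) /\
  (forall x, filtered (fun a => waybelow x a) /\ is_inf (fun a => waybelow x a) x).

(* open sets of the interval topology: generated by the basis
   (a,b) = {x | a << x << b} *)
Definition interval_open (U : T -> Prop) : Prop :=
  forall x, U x -> exists a b, waybelow a x /\ waybelow x b /\
    (forall y, waybelow a y -> waybelow y b -> U y).

Definition compact_wrt (opn : (T -> Prop) -> Prop) (K : T -> Prop) : Prop :=
  forall C : (T -> Prop) -> Prop,
    (forall U, C U -> opn U) ->
    (forall x, K x -> exists U, C U /\ U x) ->
    exists l : list (T -> Prop),
      (forall U, In U l -> C U) /\ (forall x, K x -> exists U, In U l /\ U x).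

Definition globally_hyperbolic : Prop :=
  bicontinuous /\
  forall a b, compact_wrt interval_open (fun x => le a x /\ le x b).

Definition continuous_dcpo : Prop :=
  continuous_poset /\ forall S, directed S -> exists s, is_sup S s.

Definition scott_open (U : T -> Prop) : Prop :=
  (forall x y, U x -> le x y -> U y) /\
  (forall S, directed S -> forall s, is_sup S s -> U s -> exists x, S x /\ U x).

Definition is_max (m : T) : Prop := forall y, le m y -> y = m.

End OrderTheory.

Section IntervalDomain.
Variable D : Type.
Variable le : D -> D -> Prop.
Variables left right : D -> D.

Definition MaxD : Type := { p : D | is_max le p }.

Definition leM (a b : MaxD) : Prop :=
  exists z, left z = proj1_sig a /\ right z = proj1_sig b.

Definition rel_scott_open (V : MaxD -> Prop) : Prop :=
  exists U : D -> Prop, scott_open le U /\ forall m : MaxD, V m <-> U (proj1_sig m).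

Definition interval_poset : Prop :=
  is_partial_order le /\
  (forall x, is_max le (left x) /\ is_max le (right x)) /\
  (forall x, is_inf2 le (left x) (right x) x) /\
  (forall x y, right x = left y ->
     exists z, is_inf2 le x y z /\ left z = left x /\ right z = right y) /\
  (forall x p, is_max le p -> le x p ->
     (exists z, is_inf2 le (left x) p z /\ left z = left x /\ right z = p) /\
     (exists z, is_inf2 le p (right x) z /\ left z = p /\ right z = right x)).

Definition same_image (f : D -> D) (S T : D -> Prop) : Prop :=
  forall r, (exists x, S x /\ f x = r) <-> (exists x, T x /\ f x = r).

Definition interval_domain : Prop :=
  interval_poset /\ continuous_dcpo le /\
  (* (i) *)
  (forall x p, is_max le p -> waybelow le x p ->
     (forall z, is_inf2 le (left x) p z -> exists w, waybelow le z w) /\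
     (forall z, is_inf2 le p (right x) z -> exists w, waybelow le z w)) /\
  (* (ii) *)
  (forall x,
     ((exists a, waybelow le x a) <->
      (forall y, left y = left x -> le y x ->
         waybelow_in le (fun w => right w = right y) y (right y))) /\
     ((exists a, waybelow le x a) <->
      (forall y, right y = right x -> le y x ->
         waybelow_in le (fun w => left w = left y) y (left y)))) /\
  (* (iii)(a) *)
  (forall p (S : D -> Prop) s, is_max le p -> (forall x, S x -> left x = p) ->
     directed le S -> is_sup le S s ->
     left s = p /\
     (forall q (T : D -> Prop) t, is_max le q -> (forall x, T x -> left x = q) ->
        directed le T -> is_sup le T t -> same_image right T S ->
        right s = right t)) /\
  (* (iii)(b) *)
  (forall q (S : D -> Prop) s, is_max le q -> (forall x, S x -> right x = q) ->
     directed le S -> is_sup le S s ->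
     right s = q /\
     (forall p (T : D -> Prop) t, is_max le p -> (forall x, T x -> right x = p) ->
        directed le T -> is_sup le T t -> same_image left T S ->
        left s = left t)) /\
  (* (iv) *)
  (forall x, compact_wrt rel_scott_open (fun m : MaxD => le x (proj1_sig m))).

End IntervalDomain.

From Stdlib Require Import List Classical FunctionalExtensionality PropExtensionality.

(* The endpoint maps are continuous: if X is directed in D with supremum z, then
   left[X] is directed in max(D) with supremum left z (axiom (iii)), and dually
   right[X] is filtered with infimum right z.  Approximating a maximal p from
   below in D therefore approximates p from both sides in max(D), and x << p in D
   gives left x << p << right x.  Conversely, axiom (ii) converts a << b in
   max(D) into way-below statements inside the fibres [a, .] and [., b] of D;
   this yields the filtered description of <<, so (max(D), <=) is bicontinuous,
   and also a << p << b ==> [a, b] << p.  Hence the basic open sets (a, b) of the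
   interval topology and the sets {p | z << p} of the relative Scott topology
   generate each other, and compactness of the closed intervals is axiom (iv).
   Everything is self-dual under exchanging left and right. *)

Section PosetFacts.
Context {T : Type} {R : T -> T -> Prop}.
Hypothesis HR : is_partial_order R.

Let R_refl : forall x, R x x := proj1 HR.
Let R_trans : forall x y z, R x y -> R y z -> R x z := proj2 (proj2 HR).

Lemma waybelow_le x y : waybelow R x y -> R x y.
Proof.
  intros Hxy.
  destruct (Hxy (eq y)) with (s := y) as [t [<- Hxt]]; auto.
  - split; [exists y; reflexivity|]. intros a b <- <-. exists y; auto.
  - split; [intros a <-; auto|]. intros u Hu; apply Hu; reflexivity.
Qed.

Lemma le_waybelow_trans x y z : R x y -> waybelow R y z -> waybelow R x z.
Proof.
  intros Hxy Hyz S HS s Hs Hzs.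
  destruct (Hyz S HS s Hs Hzs) as [t [Ht Hyt]].
  exists t; split; [exact Ht | exact (R_trans x y t Hxy Hyt)].
Qed.

Lemma waybelow_le_trans x y z : waybelow R x y -> R y z -> waybelow R x z.
Proof.
  intros Hxy Hyz S HS s Hs Hzs. exact (Hxy S HS s Hs (R_trans y z s Hyz Hzs)).
Qed.

Lemma filtered_is_inf_of_coinitial (F U : T -> Prop) x :
  filtered R F -> is_inf R F x -> (forall f, F f -> U f) ->
  (forall u, U u -> exists f, F f /\ R f u) ->
  filtered R U /\ is_inf R U x.
Proof.
  intros [[f0 Hf0] HF] [Hx_lb Hx_glb] HFU HUF.
  split; split.
  - exists f0; auto.
  - intros u1 u2 Hu1 Hu2.
    destruct (HUF u1 Hu1) as [f1 [Hf1 Hf1u]].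
    destruct (HUF u2 Hu2) as [f2 [Hf2 Hf2u]].
    destruct (HF f1 f2 Hf1 Hf2) as [f [Hf [Hff1 Hff2]]].
    exists f; split; [exact (HFU f Hf) | split].
    + exact (R_trans _ _ _ Hff1 Hf1u).
    + exact (R_trans _ _ _ Hff2 Hf2u).
  - intros u Hu. destruct (HUF u Hu) as [f [Hf Hfu]]. exact (R_trans _ _ _ (Hx_lb f Hf) Hfu).
  - intros l Hl. apply Hx_glb. intros f Hf. apply Hl, HFU, Hf.
Qed.

End PosetFacts.

Section ContinuousPosetFacts.
Context {T : Type} {R : T -> T -> Prop}.
Hypothesis HRc : continuous_poset R.

Let HR : is_partial_order R := proj1 HRc.
Let R_refl : forall x, R x x := proj1 HR.
Let R_trans : forall x y z, R x y -> R y z -> R x z := proj2 (proj2 HR).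

Lemma approximants x :
  exists S, (forall s, S s -> waybelow R s x) /\ directed R S /\ is_sup R S x.
Proof.
  destruct (proj2 HRc) as [B HB]. destruct (HB x) as [S [HSB HS]].
  exists S. split; [intros s Hs; apply (HSB s Hs) | exact HS].
Qed.

Lemma waybelow_interpolate x y :
  waybelow R x y -> exists w, waybelow R x w /\ waybelow R w y.
Proof.
  intros Hxy.
  destruct (approximants y) as [Sy [HSy_wb [HSy_dir HSy_sup]]].
  set (Y := fun v => exists w, Sy w /\ waybelow R v w).
  assert (HY_dir : directed R Y).
  { split.
    - destruct HSy_dir as [[w Hw] _].
      destruct (approximants w) as [Sw [HSw_wb [[[v Hv] _] _]]].
      exists v, w; auto.
    - intros v1 v2 [w1 [Hw1 Hv1]] [w2 [Hw2 Hv2]].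
      destruct (proj2 HSy_dir w1 w2 Hw1 Hw2) as [w [Hw [Hw1w Hw2w]]].
      destruct (approximants w) as [Sw [HSw_wb [HSw_dir HSw_sup]]].
      destruct (Hv1 Sw HSw_dir w HSw_sup Hw1w) as [u1 [Hu1 Hv1u1]].
      destruct (Hv2 Sw HSw_dir w HSw_sup Hw2w) as [u2 [Hu2 Hv2u2]].
      destruct (proj2 HSw_dir u1 u2 Hu1 Hu2) as [u [Hu [Hu1u Hu2u]]].
      exists u. split; [exists w; auto | split; eapply R_trans; eauto]. }
  assert (HY_sup : is_sup R Y y).
  { split.
    - intros v [w [Hw Hvw]].
      exact (R_trans _ _ _ (waybelow_le HR v w Hvw) (proj1 HSy_sup w Hw)).
    - intros u Hu. apply (proj2 HSy_sup). intros w Hw.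
      destruct (approximants w) as [Sw [HSw_wb [_ HSw_sup]]].
      apply (proj2 HSw_sup). intros v Hv. apply Hu. exists w; auto. }
  destruct (Hxy Y HY_dir y HY_sup (R_refl y)) as [v [[w [Hw Hvw]] Hxv]].
  exists w. split; [exact (le_waybelow_trans HR x v w Hxv Hvw) | exact (HSy_wb w Hw)].
Qed.

Lemma scott_open_waybelow_above (P : T -> Prop) :
  scott_open R (fun d => exists z, P z /\ waybelow R z d).
Proof.
  split.
  - intros d d' [z [Hz Hzd]] Hdd'.
    exists z. split; [exact Hz | exact (waybelow_le_trans HR z d d' Hzd Hdd')].
  - intros S HS s Hs [z [Hz Hzs]].
    destruct (waybelow_interpolate z s Hzs) as [w [Hzw Hws]].
    destruct (Hws S HS s Hs (R_refl s)) as [t [Ht Hwt]].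
    exists t. split; [exact Ht|].
    exists z. split; [exact Hz | exact (waybelow_le_trans HR z w t Hzw Hwt)].
Qed.

End ContinuousPosetFacts.

Lemma is_inf2_sym {T : Type} (R : T -> T -> Prop) a b z :
  is_inf2 R a b z -> is_inf2 R b a z.
Proof.
  intros [Hlb Hglb]; split.
  - intros x Hx; apply Hlb; tauto.
  - intros u Hu; apply Hglb; intros x Hx; apply Hu; tauto.
Qed.

Definition ends {D : Type} (left right : D -> D) (a b : D) : Prop :=
  exists z, left z = a /\ right z = b.

Definition endpoints {D : Type} {le : D -> D -> Prop} (f : D -> D) (X : D -> Prop) :
  MaxD le -> Prop :=
  fun m => exists x, X x /\ f x = proj1_sig m.

Definition intervals_to {D : Type} {le : D -> D -> Prop} (left right : D -> D)
  (A : MaxD le -> Prop) (q : D) : D -> Prop :=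
  fun z => right z = q /\ exists t, A t /\ left z = proj1_sig t.

Section IntervalDomainStructure.
Context {D : Type} {le : D -> D -> Prop} {left right : D -> D}.
Hypothesis HD : interval_domain le left right.
Local Notation LM := (leM (le := le) left right).
Local Notation "a <=M b" := (ends left right a b) (at level 70).

Lemma leD_continuous : continuous_poset le.
Proof. destruct HD as [_ [[Hc _] _]]; exact Hc. Qed.

Lemma leD_partial_order : is_partial_order le.
Proof. exact (proj1 leD_continuous). Qed.

Let Hpo : is_partial_order le := leD_partial_order.
Let leD_refl : forall x, le x x := proj1 Hpo.
Let leD_antisym : forall x y, le x y -> le y x -> x = y := proj1 (proj2 Hpo).
Let leD_trans : forall x y z, le x y -> le y z -> le x z := proj2 (proj2 Hpo).

Lemma dcpo_sup S : directed le S -> exists s, is_sup le S s.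
Proof. destruct HD as [_ [[_ Hsup] _]]; apply Hsup. Qed.

Lemma left_max x : is_max le (left x).
Proof. destruct HD as [[_ [Hmax _]] _]; apply Hmax. Qed.

Lemma right_max x : is_max le (right x).
Proof. destruct HD as [[_ [Hmax _]] _]; apply Hmax. Qed.

Lemma inf_ends x : is_inf2 le (left x) (right x) x.
Proof. destruct HD as [[_ [_ [Hinf _]]] _]; apply Hinf. Qed.

Lemma le_left x : le x (left x).
Proof. apply (proj1 (inf_ends x)); auto. Qed.

Lemma le_right x : le x (right x).
Proof. apply (proj1 (inf_ends x)); auto. Qed.

Lemma max_ends p : is_max le p -> left p = p /\ right p = p.
Proof. intros Hp; split; apply Hp; [apply le_left | apply le_right]. Qed.

Lemma interval_ext x y : left x = left y -> right x = right y -> x = y.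
Proof.
  intros El Er.
  destruct (inf_ends x) as [Hx_lb Hx_glb]. destruct (inf_ends y) as [Hy_lb Hy_glb].
  rewrite El, Er in Hx_lb, Hx_glb.
  apply leD_antisym; [apply Hy_glb, Hx_lb | apply Hx_glb, Hy_lb].
Qed.

Lemma ends_self x : left x <=M right x.
Proof. exists x; auto. Qed.

Lemma ends_refl p : is_max le p -> p <=M p.
Proof. intros Hp; exists p; apply max_ends, Hp. Qed.

Lemma ends_trans a b c : a <=M b -> b <=M c -> a <=M c.
Proof.
  intros [x [Hxa Hxb]] [y [Hyb Hyc]].
  destruct HD as [[_ [_ [_ [Hglue _]]]] _].
  destruct (Hglue x y) as [z [_ [Hzx Hzy]]]; [congruence|].
  exists z; split; congruence.
Qed.

Lemma ends_of_le_max x p : is_max le p -> le x p -> left x <=M p /\ p <=M right x.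
Proof.
  intros Hp Hxp. destruct HD as [[_ [_ [_ [_ Hext]]]] _].
  destruct (Hext x p Hp Hxp) as [[z [_ [Hzl Hzr]]] [z' [_ [Hz'l Hz'r]]]].
  split; [exists z | exists z']; auto.
Qed.

Lemma le_max_of_ends x p : left x <=M p -> p <=M right x -> le x p.
Proof.
  intros [y [Hyl Hyr]] [y' [Hy'l Hy'r]].
  destruct HD as [[_ [_ [_ [Hglue _]]]] _].
  destruct (Hglue y y') as [z [Hz [Hzl Hzr]]]; [congruence|].
  assert (Hzx : z = x) by (apply interval_ext; congruence). subst z.
  apply leD_trans with y; [apply (proj1 Hz); auto|].
  rewrite <- Hyr; apply le_right.
Qed.

Lemma ends_antisym a b : a <=M b -> b <=M a -> a = b.
Proof.
  intros Hab Hba.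
  assert (Ha : is_max le a) by (destruct Hab as [z [<- _]]; apply left_max).
  destruct (max_ends a Ha) as [Eal Ear].
  assert (Hle : le a b) by (apply le_max_of_ends; rewrite ?Eal, ?Ear; assumption).
  symmetry; apply Ha, Hle.
Qed.

Lemma ends_left_of_le x y : le x y -> left x <=M left y.
Proof.
  intros Hxy. apply (ends_of_le_max x (left y) (left_max y)).
  apply leD_trans with y; [exact Hxy | apply le_left].
Qed.

Lemma ends_right_of_le x y : le x y -> right y <=M right x.
Proof.
  intros Hxy. apply (ends_of_le_max x (right y) (right_max y)).
  apply leD_trans with y; [exact Hxy | apply le_right].
Qed.

Lemma le_of_ends x y : left x <=M left y -> right y <=M right x -> le x y.
Proof.
  intros Hl Hr. apply (proj2 (inf_ends y)).
  intros w [-> | ->]; apply le_max_of_ends.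
  - exact Hl.
  - exact (ends_trans _ _ _ (ends_self y) Hr).
  - exact (ends_trans _ _ _ Hl (ends_self y)).
  - exact Hr.
Qed.

Lemma maxD_eq (a b : MaxD le) : proj1_sig a = proj1_sig b -> a = b.
Proof. destruct a, b; simpl; intros ->; f_equal; apply proof_irrelevance. Qed.

Definition leftM x : MaxD le := exist _ (left x) (left_max x).
Definition rightM x : MaxD le := exist _ (right x) (right_max x).

Lemma leM_refl a : LM a a.
Proof. exact (ends_refl _ (proj2_sig a)). Qed.

Lemma leM_trans a b c : LM a b -> LM b c -> LM a c.
Proof. apply ends_trans. Qed.

Lemma leM_partial_order : is_partial_order LM.
Proof.
  split; [exact leM_refl | split; [|exact leM_trans]].
  intros a b Hab Hba; apply maxD_eq, ends_antisym; assumption.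
Qed.

Lemma endpoints_left_directed X : directed le X -> directed LM (endpoints left X).
Proof.
  intros [[x0 Hx0] HX]. split.
  - exists (leftM x0), x0; auto.
  - intros a b [x [Hx Hxa]] [y [Hy Hyb]].
    destruct (HX x y Hx Hy) as [w [Hw [Hxw Hyw]]].
    exists (leftM w). split; [exists w; auto | split].
    + change (proj1_sig a <=M left w). rewrite <- Hxa. apply ends_left_of_le, Hxw.
    + change (proj1_sig b <=M left w). rewrite <- Hyb. apply ends_left_of_le, Hyw.
Qed.

Lemma intervals_to_directed A q : directed LM A -> (forall t, A t -> LM t q) ->
  directed le (intervals_to left right A (proj1_sig q)).
Proof.
  intros [[t0 Ht0] HA] Hq. split.
  - destruct (Hq t0 Ht0) as [z [Hzl Hzr]]. exists z; split; [exact Hzr | exists t0; auto].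
  - intros x y [Hxr [tx [Htx Hxl]]] [Hyr [ty [Hty Hyl]]].
    destruct (HA tx ty Htx Hty) as [t [Ht [Htxt Htyt]]].
    destruct (Hq t Ht) as [z [Hzl Hzr]].
    pose proof (leM_refl q) as Hqq.
    exists z. split; [split; [exact Hzr | exists t; auto] | split; apply le_of_ends].
    + rewrite Hxl, Hzl; exact Htxt.
    + rewrite Hzr, Hxr; exact Hqq.
    + rewrite Hyl, Hzl; exact Htyt.
    + rewrite Hzr, Hyr; exact Hqq.
Qed.

Lemma right_sup_of_right_fiber q S s : is_max le q -> (forall x, S x -> right x = q) ->
  directed le S -> is_sup le S s -> right s = q.
Proof.
  intros Hq HS Hdir Hs. destruct HD as [_ [_ [_ [_ [_ [Hiiib _]]]]]].
  exact (proj1 (Hiiib q S s Hq HS Hdir Hs)).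
Qed.

Lemma intervals_to_left_image A q : (forall t, A t -> LM t q) -> forall r,
  (exists z, intervals_to left right A (proj1_sig q) z /\ left z = r) <->
  (exists t, A t /\ proj1_sig t = r).
Proof.
  intros Hq r. split.
  - intros [z [[_ [t [Ht Hzt]]] <-]]. exists t; auto.
  - intros [t [Ht <-]]. destruct (Hq t Ht) as [z [Hzl Hzr]].
    exists z. split; [split; [exact Hzr | exists t; auto] | exact Hzl].
Qed.

Lemma left_sup_intervals_to A q z : directed LM A -> (forall t, A t -> LM t q) ->
  is_sup le (intervals_to left right A (proj1_sig q)) z -> is_sup LM A (leftM z).
Proof.
  intros HA Hq Hz. split.
  - intros t Ht. destruct (Hq t Ht) as [w [Hwl Hwr]].
    change (proj1_sig t <=M left z). rewrite <- Hwl.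
    apply ends_left_of_le, (proj1 Hz). split; [exact Hwr | exists t; auto].
  - intros u Hu.
    pose proof (intervals_to_directed A u HA Hu) as Hu_dir.
    destruct (dcpo_sup _ Hu_dir) as [zu Hzu].
    (* By (iii)(b) the left end of the supremum does not depend on the common
       right end, which may therefore be moved from q to u. *)
    assert (Hzzu : left z = left zu).
    { destruct HD as [_ [_ [_ [_ [_ [Hiiib _]]]]]].
      apply (proj2 (Hiiib _ _ z (proj2_sig q) (fun x Hx => proj1 Hx)
                      (intervals_to_directed A q HA Hq) Hz)
                   _ _ zu (proj2_sig u) (fun x Hx => proj1 Hx) Hu_dir Hzu).
      intros r. rewrite (intervals_to_left_image A u Hu r), (intervals_to_left_image A q Hq r).
      reflexivity. }
    change (left z <=M proj1_sig u).
    rewrite Hzzu, <- (right_sup_of_right_fiber _ _ zu (proj2_sig u) (fun x Hx => proj1 Hx) Hu_dir Hzu).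
    apply ends_self.
Qed.

Lemma leM_bounded_sup A q : directed LM A -> (forall t, A t -> LM t q) ->
  exists L, is_sup LM A L.
Proof.
  intros HA Hq. destruct (dcpo_sup _ (intervals_to_directed A q HA Hq)) as [z Hz].
  exists (leftM z). exact (left_sup_intervals_to A q z HA Hq Hz).
Qed.

Lemma is_sup_endpoints_left X z m : directed le X -> is_sup le X z ->
  left z = proj1_sig m -> is_sup LM (endpoints left X) m.
Proof.
  intros HX Hz Hzm.
  assert (Hm : forall a, endpoints left X a -> LM a m).
  { intros a [x [Hx Hxa]]. change (proj1_sig a <=M proj1_sig m). rewrite <- Hxa, <- Hzm.
    apply ends_left_of_le, (proj1 Hz), Hx. }
  destruct (leM_bounded_sup _ m (endpoints_left_directed X HX) Hm) as [L HL].
  assert (HLm : LM L m) by exact (proj2 HL m Hm).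
  assert (HmL : LM m L).
  { (* The interval [L, right z] is an upper bound of X, hence lies above z. *)
    assert (HLz : proj1_sig L <=M right z).
    { apply ends_trans with (left z); [rewrite Hzm; exact HLm | apply ends_self]. }
    destruct HLz as [w [Hwl Hwr]].
    assert (Hzw : le z w).
    { apply (proj2 Hz). intros x Hx. apply le_of_ends.
      - rewrite Hwl. exact (proj1 HL (leftM x) (ex_intro _ x (conj Hx eq_refl))).
      - rewrite Hwr. apply ends_right_of_le, (proj1 Hz), Hx. }
    change (proj1_sig m <=M proj1_sig L). rewrite <- Hzm, <- Hwl.
    apply ends_left_of_le, Hzw. }
  split; [exact Hm|]. intros u Hu. exact (leM_trans m L u HmL (proj2 HL u Hu)).
Qed.

Lemma is_sup_of_is_sup_in_right_fiber q S s : is_max le q ->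
  (forall x, S x -> right x = q) -> directed le S ->
  is_sup_in le (fun w => right w = q) S s -> is_sup le S s.
Proof.
  intros Hq HS Hdir [_ [Hs_ub Hs_least]].
  destruct (dcpo_sup S Hdir) as [z Hz].
  assert (Hzs : z = s).
  { apply leD_antisym; [apply (proj2 Hz), Hs_ub|].
    apply Hs_least; [exact (right_sup_of_right_fiber q S z Hq HS Hdir Hz) | exact (proj1 Hz)]. }
  rewrite <- Hzs; exact Hz.
Qed.

Lemma intervals_to_is_sup_in A q : is_sup LM A q ->
  is_sup_in le (fun w => right w = proj1_sig q)
    (intervals_to left right A (proj1_sig q)) (proj1_sig q).
Proof.
  intros Hq. destruct (max_ends _ (proj2_sig q)) as [Eql Eqr].
  split; [exact Eqr | split].
  - intros z [Hzr _]. rewrite <- Hzr. apply le_right.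
  - intros u Hur Hu.
    assert (Hul : left u = proj1_sig q).
    { apply ends_antisym; [rewrite <- Hur; apply ends_self|].
      apply (proj2 Hq (leftM u)). intros t Ht.
      destruct (proj1 Hq t Ht) as [w [Hwl Hwr]].
      change (proj1_sig t <=M left u). rewrite <- Hwl.
      apply ends_left_of_le, Hu. split; [exact Hwr | exists t; auto]. }
    replace u with (proj1_sig q) by (apply interval_ext; congruence).
    apply leD_refl.
Qed.

Lemma sup_intervals_to A q z : directed LM A -> is_sup LM A q ->
  is_sup le (intervals_to left right A (proj1_sig q)) z -> z = proj1_sig q.
Proof.
  intros HA Hq Hz.
  destruct (intervals_to_is_sup_in A q Hq) as [_ [_ Hq_least]].
  apply (proj2_sig q), Hq_least; [|exact (proj1 Hz)].
  exact (right_sup_of_right_fiber _ _ z (proj2_sig q) (fun x Hx => proj1 Hx)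
           (intervals_to_directed A q HA (proj1 Hq)) Hz).
Qed.

Lemma waybelow_leM_of_exact_sups a b :
  (forall A, directed LM A -> is_sup LM A b -> exists t, A t /\ LM a t) ->
  waybelow LM a b.
Proof.
  intros Hab A HA s Hs [w [Hwb Hws]].
  (* Approximate the interval w = [b, s] in D: the left ends have supremum b. *)
  destruct (approximants leD_continuous w) as [X [HXwb [HXdir HXsup]]].
  destruct (Hab (endpoints left X) (endpoints_left_directed X HXdir)
                (is_sup_endpoints_left X w b HXdir HXsup Hwb)) as [m [[x [Hx Hxm]] Ham]].
  pose proof (intervals_to_directed A s HA (proj1 Hs)) as Hs_dir.
  destruct (dcpo_sup _ Hs_dir) as [z Hz].
  destruct (HXwb x Hx _ Hs_dir z Hz) as [f [[_ [t [Ht Hft]]] Hxf]].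
  { rewrite (sup_intervals_to A s z HA Hs Hz), <- Hws. apply le_right. }
  exists t. split; [exact Ht|].
  apply leM_trans with m; [exact Ham|].
  change (proj1_sig m <=M proj1_sig t). rewrite <- Hxm, <- Hft.
  apply ends_left_of_le, Hxf.
Qed.

Lemma waybelow_leM_left x p m : waybelow le x (proj1_sig p) ->
  left x = proj1_sig m -> waybelow LM m p.
Proof.
  intros Hxp Hxm. apply waybelow_leM_of_exact_sups. intros A HA Hp.
  pose proof (intervals_to_directed A p HA (proj1 Hp)) as Hp_dir.
  destruct (dcpo_sup _ Hp_dir) as [z Hz].
  destruct (Hxp _ Hp_dir z Hz) as [f [[_ [t [Ht Hft]]] Hxf]].
  { rewrite (sup_intervals_to A p z HA Hp Hz). apply leD_refl. }
  exists t. split; [exact Ht|].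
  change (proj1_sig m <=M proj1_sig t). rewrite <- Hxm, <- Hft.
  apply ends_left_of_le, Hxf.
Qed.

Lemma leM_continuous : continuous_poset LM.
Proof.
  split; [exact leM_partial_order|]. exists (fun _ => True). intros p.
  destruct (approximants leD_continuous (proj1_sig p)) as [X [HXwb [HXdir HXsup]]].
  exists (endpoints left X). split; [|split].
  - intros m [x [Hx Hxm]]. split; [exact I | exact (waybelow_leM_left x p m (HXwb x Hx) Hxm)].
  - exact (endpoints_left_directed X HXdir).
  - exact (is_sup_endpoints_left X _ p HXdir HXsup (proj1 (max_ends _ (proj2_sig p)))).
Qed.

Lemma interval_has_waybelow_above a b x : waybelow LM a b ->
  left x = proj1_sig a -> right x = proj1_sig b -> exists w, waybelow le x w.
Proof.
  intros Hab Hxa Hxb. destruct HD as [_ [_ [_ [Hii _]]]].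
  apply (proj2 (proj1 (Hii x))).
  intros y Hyx_l Hyx S HS HSdir s Hs Hys.
  assert (Hsy : s = right y) by exact (right_max y s Hys). subst s.
  pose proof (proj1 (max_ends _ (right_max y))) as Hyy.
  pose proof (is_sup_of_is_sup_in_right_fiber _ S _ (right_max y) HS HSdir Hs) as HSsup.
  destruct (Hab (endpoints left S) (endpoints_left_directed S HSdir) (rightM y)
                (is_sup_endpoints_left S _ (rightM y) HSdir HSsup Hyy))
    as [m [[t [Ht Htm]] Ham]].
  { change (proj1_sig b <=M right y). rewrite <- Hxb. apply ends_right_of_le, Hyx. }
  exists t. split; [exact Ht | apply le_of_ends].
  - rewrite Hyx_l, Hxa, Htm. exact Ham.
  - rewrite (HS t Ht). apply ends_refl, right_max.
Qed.

End IntervalDomainStructure.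

Lemma interval_domain_swap {D : Type} {le : D -> D -> Prop} {left right : D -> D} :
  interval_domain le left right -> interval_domain le right left.
Proof.
  intros [[Hpo [Hmax [Hinf [Hglue Hext]]]] [Hc [Hi [Hii [Hiiia [Hiiib Hiv]]]]]].
  split; [|split; [exact Hc | split; [|split; [|split; [exact Hiiib | split; [exact Hiiia | exact Hiv]]]]]].
  - split; [exact Hpo | split; [intros x; split; apply Hmax | split; [|split]]].
    + intros x; apply is_inf2_sym, Hinf.
    + intros x y Exy. destruct (Hglue y x (eq_sym Exy)) as [z [Hz [Hzl Hzr]]].
      exists z; split; [apply is_inf2_sym|]; auto.
    + intros x p Hp Hxp.
      destruct (Hext x p Hp Hxp) as [[z [Hz [Hzl Hzr]]] [z' [Hz' [Hz'l Hz'r]]]].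
      split; [exists z' | exists z]; split; try apply is_inf2_sym; auto.
  - intros x p Hp Hxp. destruct (Hi x p Hp Hxp) as [Hl Hr]. split.
    + intros z Hz; apply Hr, is_inf2_sym, Hz.
    + intros z Hz; apply Hl, is_inf2_sym, Hz.
  - intros x; split; apply Hii.
Qed.

Lemma leM_swap {D : Type} {le : D -> D -> Prop} (left right : D -> D) :
  leM (le := le) right left = fun a b => leM left right b a.
Proof.
  apply functional_extensionality; intros a; apply functional_extensionality; intros b.
  apply propositional_extensionality. split; intros [z [Hl Hr]]; exists z; auto.
Qed.

Section WayBelowDuality.
Context {D : Type} {le : D -> D -> Prop} {left right : D -> D}.
Hypothesis HD : interval_domain le left right.
Local Notation LM := (leM (le := le) left right).

Let HD' : interval_domain le right left := interval_domain_swap HD.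

(* Way-below for the reversed order is the filtered-set form of [a << b] demanded
   by bicontinuity. *)
Lemma waybelow_leM_filtered a b : waybelow LM a b -> waybelow (fun u v => LM v u) b a.
Proof.
  intros Hab.
  pose proof (waybelow_le (leM_partial_order HD) a b Hab) as Hab_le.
  destruct (Hab_le) as [x [Hxa Hxb]].
  destruct (interval_has_waybelow_above HD a b x Hab Hxa Hxb) as [w Hxw].
  intros S HS i Hi Hia.
  destruct (leM_trans HD i a b Hia Hab_le) as [y [Hyi Hyb]].
  assert (Hyx : le y x).
  { apply (le_of_ends HD).
    - rewrite Hyi, Hxa. exact Hia.
    - rewrite Hxb, Hyb. exact (leM_refl HD b). }
  assert (Hy : waybelow_in le (fun v => left v = left y) y (left y)).
  { pose proof HD as [_ [_ [_ [Hii _]]]].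
    exact (proj1 (proj2 (Hii x)) (ex_intro _ w Hxw) y (eq_trans Hyb (eq_sym Hxb)) Hyx). }
  rewrite Hyi in Hy.
  assert (HZdir : directed le (intervals_to right left S (proj1_sig i))).
  { pose proof (intervals_to_directed HD' S i) as H. rewrite leM_swap in H.
    exact (H HS (proj1 Hi)). }
  assert (HZsup : is_sup_in le (fun v => left v = proj1_sig i)
                    (intervals_to right left S (proj1_sig i)) (proj1_sig i)).
  { pose proof (intervals_to_is_sup_in HD' S i) as H. rewrite leM_swap in H. exact (H Hi). }
  destruct (Hy _ (fun v Hv => proj1 Hv) HZdir _ HZsup
              (proj1 (leD_partial_order HD) _)) as [z [[_ [s [Hs Hzs]]] Hyz]].
  exists s. split; [exact Hs|].
  change (ends left right (proj1_sig s) (proj1_sig b)). rewrite <- Hzs, <- Hyb.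
  exact (ends_right_of_le HD y z Hyz).
Qed.

End WayBelowDuality.

Section MaxGloballyHyperbolic.
Context {D : Type} {le : D -> D -> Prop} {left right : D -> D}.
Hypothesis HD : interval_domain le left right.
Local Notation LM := (leM (le := le) left right).

Let HD' : interval_domain le right left := interval_domain_swap HD.

Lemma waybelow_leM_iff_filtered a b :
  waybelow LM a b <-> waybelow (fun u v => LM v u) b a.
Proof.
  split; [exact (waybelow_leM_filtered HD a b)|].
  pose proof (waybelow_leM_filtered HD' b a) as H. rewrite leM_swap in H. exact H.
Qed.

Lemma waybelow_leM_right x p m : waybelow le x (proj1_sig p) ->
  right x = proj1_sig m -> waybelow LM p m.
Proof.
  intros Hxp Hxm. apply (proj2 (waybelow_leM_iff_filtered p m)).
  pose proof (waybelow_leM_left HD' x p m Hxp Hxm) as H. rewrite leM_swap in H. exact H.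
Qed.

Lemma endpoints_right_filtered X : directed le X -> filtered LM (endpoints right X).
Proof.
  intros HX. pose proof (endpoints_left_directed HD' X HX) as H.
  rewrite leM_swap in H. exact H.
Qed.

Lemma is_inf_endpoints_right X z m : directed le X -> is_sup le X z ->
  right z = proj1_sig m -> is_inf LM (endpoints right X) m.
Proof.
  intros HX Hz Hzm. pose proof (is_sup_endpoints_left HD' X z m HX Hz Hzm) as H.
  rewrite leM_swap in H. exact H.
Qed.

Lemma waybelow_leM_above_filtered x :
  filtered LM (waybelow LM x) /\ is_inf LM (waybelow LM x) x.
Proof.
  destruct (approximants (leD_continuous HD) (proj1_sig x)) as [X [HXwb [HXdir HXsup]]].
  pose proof (endpoints_right_filtered X HXdir) as HXfilt.
  pose proof (is_inf_endpoints_right X _ x HXdir HXsup (proj2 (max_ends HD _ (proj2_sig x))))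
    as HXinf.
  apply (filtered_is_inf_of_coinitial (leM_partial_order HD) (endpoints right X));
    [exact HXfilt | exact HXinf | |].
  - intros m [y [Hy Hym]]. exact (waybelow_leM_right y x m (HXwb y Hy) Hym).
  - intros u Hxu.
    exact (proj1 (waybelow_leM_iff_filtered x u) Hxu _ HXfilt x HXinf (leM_refl HD x)).
Qed.

Lemma leM_bicontinuous : bicontinuous LM.
Proof.
  split; [exact (leM_continuous HD) | split; [|exact waybelow_leM_above_filtered]].
  intros a b. rewrite waybelow_leM_iff_filtered.
  split; [intros H S i HS; exact (H S HS i) | intros H S HS i; exact (H S i HS)].
Qed.

Lemma waybelow_interval_of_waybelow_leM (a p b : MaxD le) :
  waybelow LM a p -> waybelow LM p b ->
  forall z, left z = proj1_sig a -> right z = proj1_sig b -> waybelow le z (proj1_sig p).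
Proof.
  intros Hap Hpb z Hza Hzb S HS s Hs Hps.
  assert (Hsp : s = proj1_sig p) by exact (proj2_sig p s Hps). subst s.
  destruct (max_ends HD _ (proj2_sig p)) as [Epl Epr].
  destruct (Hap (endpoints left S) (endpoints_left_directed HD S HS) p
                (is_sup_endpoints_left HD S _ p HS Hs Epl) (leM_refl HD p))
    as [m1 [[t1 [Ht1 Htm1]] Ham1]].
  destruct (proj1 (waybelow_leM_iff_filtered p b) Hpb (endpoints right S)
                (endpoints_right_filtered S HS) p (is_inf_endpoints_right S _ p HS Hs Epr)
                (leM_refl HD p))
    as [m2 [[t2 [Ht2 Htm2]] Hbm2]].
  destruct (proj2 HS t1 t2 Ht1 Ht2) as [t [Ht [Ht1t Ht2t]]].
  exists t. split; [exact Ht | apply (le_of_ends HD)].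
  - rewrite Hza. apply (ends_trans HD _ (proj1_sig m1)); [exact Ham1|].
    rewrite <- Htm1. exact (ends_left_of_le HD t1 t Ht1t).
  - rewrite Hzb. apply (ends_trans HD _ (proj1_sig m2)); [|exact Hbm2].
    rewrite <- Htm2. exact (ends_right_of_le HD t2 t Ht2t).
Qed.

Lemma rel_scott_open_of_interval_open V : interval_open LM V -> rel_scott_open V.
Proof.
  intros HV. pose proof (leM_partial_order HD) as HM.
  exists (fun d => exists z, (exists a b, left z = proj1_sig a /\ right z = proj1_sig b /\
                                forall y, waybelow LM a y -> waybelow LM y b -> V y)
                        /\ waybelow le z d).
  split; [apply (scott_open_waybelow_above (leD_continuous HD))|].
  intros m. split.
  - intros Hm. destruct (HV m Hm) as [a [b [Ham [Hmb Hab]]]].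
    destruct (leM_trans HD a m b (waybelow_le HM _ _ Ham) (waybelow_le HM _ _ Hmb))
      as [z [Hza Hzb]].
    exists z. split; [exists a, b; auto|].
    exact (waybelow_interval_of_waybelow_leM a m b Ham Hmb z Hza Hzb).
  - intros [z [[a [b [Hza [Hzb Hab]]]] Hzm]]. apply Hab.
    + exact (waybelow_leM_left HD z m a Hzm Hza).
    + exact (waybelow_leM_right z m b Hzm Hzb).
Qed.

Lemma interval_open_of_rel_scott_open V : rel_scott_open V -> interval_open LM V.
Proof.
  intros [U [[Hup Hscott] HV]] m Hm. pose proof (leM_partial_order HD) as HM.
  destruct (approximants (leD_continuous HD) (proj1_sig m)) as [X [HXwb [HXdir HXsup]]].
  destruct (Hscott X HXdir _ HXsup (proj1 (HV m) Hm)) as [x [Hx HUx]].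
  exists (leftM HD x), (rightM HD x). split; [|split].
  - exact (waybelow_leM_left HD x m (leftM HD x) (HXwb x Hx) eq_refl).
  - exact (waybelow_leM_right x m (rightM HD x) (HXwb x Hx) eq_refl).
  - intros y Hxy Hyx. apply HV, (Hup x); [exact HUx|].
    apply (le_max_of_ends HD).
    + exact (waybelow_le HM _ _ Hxy).
    + exact (waybelow_le HM _ _ Hyx).
Qed.

Lemma interval_open_iff_rel_scott_open V : interval_open LM V <-> rel_scott_open V.
Proof. split; [apply rel_scott_open_of_interval_open | apply interval_open_of_rel_scott_open]. Qed.

Lemma leM_interval_compact a b : compact_wrt (interval_open LM) (fun x => LM a x /\ LM x b).
Proof.
  intros C HC Hcover. destruct (classic (LM a b)) as [[z [Hza Hzb]] | Hab].
  - pose proof HD as [_ [_ [_ [_ [_ [_ Hiv]]]]]].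
    destruct (Hiv z C) as [l [Hl Hl_cover]].
    + intros U HU. apply rel_scott_open_of_interval_open, HC, HU.
    + intros m Hzm. apply Hcover.
      destruct (ends_of_le_max HD z _ (proj2_sig m) Hzm) as [Hzl Hzr].
      rewrite Hza in Hzl. rewrite Hzb in Hzr. split; [exact Hzl | exact Hzr].
    + exists l. split; [exact Hl|]. intros x [Hax Hxb]. apply Hl_cover, (le_max_of_ends HD).
      * rewrite Hza. exact Hax.
      * rewrite Hzb. exact Hxb.
  - exists nil. split; [intros U []|].
    intros x [Hax Hxb]. exfalso. exact (Hab (leM_trans HD a x b Hax Hxb)).
Qed.

Lemma leM_globally_hyperbolic : globally_hyperbolic LM.
Proof. split; [exact leM_bicontinuous | exact leM_interval_compact]. Qed.

End MaxGloballyHyperbolic.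

Theorem mainTheorem13 (D : Type) (le : D -> D -> Prop) (left right : D -> D)
  (HD : interval_domain le left right) :
  (* (i): a << p << b in (max D, <=) implies phi^-1[a,b] << p in D *)
  (forall a p b : MaxD le,
     waybelow (leM left right) a p -> waybelow (leM left right) p b ->
     forall z : D, left z = proj1_sig a -> right z = proj1_sig b ->
       waybelow le z (proj1_sig p)) /\
  (* (ii): interval topology = relative Scott topology on max D *)
  (forall V : MaxD le -> Prop,
     interval_open (leM left right) V <-> @rel_scott_open D le V) /\
  (* hence (max D, <=) is globally hyperbolic *)
  globally_hyperbolic (@leM D le left right).
Proof.
  split; [|split].
  - exact (waybelow_interval_of_waybelow_leM HD).
  - exact (interval_open_iff_rel_scott_open HD).
  - exact (leM_globally_hyperbolic HD).
Qed.
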